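(* Let $\mathcal{D}$ be a small category such that for every object $d$ of $\mathcal{D}$ the set of morphisms out of $d$ admits an admissible order (property (G1)), and let $G:\mathcal{C}\to\mathcal{D}$ be a faithful functor from a small category $\mathcal{C}$. Then $\mathcal{C}$ satisfies property (G1).
   Context: For a small category $\mathcal{C}$ and an object $c$, an admissible order on the morphisms out of $c$ is a choice, for every object $c'$, of a well-order $\preceq_{c'}$ on $\mathrm{Hom}(c,c')$ such that for all $f,f':c\to c'$ and $g:c'\to c''$, $f\prec_{c'}f'$ implies $g\circ f\prec_{c''}g\circ f'$. A category satisfies (G1) if the morphisms out of every object admit an admissible order. *)

Set Implicit Arguments.
Set Universe Polymorphism.

Record Category := {
  Ob : Type;
  Hom : Ob -> Ob -> Type;
  idm : forall a, Hom a a;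
  comp : forall x y z, Hom y z -> Hom x y -> Hom x z;
  comp_id_l : forall a b (f : Hom a b), comp (idm b) f = f;
  comp_id_r : forall a b (f : Hom a b), comp f (idm a) = f;
  comp_assoc : forall a b c d (h : Hom c d) (g : Hom b c) (f : Hom a b),
      comp h (comp g f) = comp (comp h g) f
}.

Arguments comp {c x y z} _ _ : rename.
Arguments idm {c} a : rename.

Record Functor (C D : Category) := {
  Fob : Ob C -> Ob D;
  Fmor : forall a b, Hom C a b -> Hom D (Fob a) (Fob b);
  F_id : forall a, Fmor a a (idm a) = idm (Fob a);
  F_comp : forall a b c (g : Hom C b c) (f : Hom C a b),
      Fmor a c (comp g f) = comp (Fmor b c g) (Fmor a b f)
}.

Arguments Fob {C D} _ _.
Arguments Fmor {C D} _ {a b} _.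

Definition faithful {C D : Category} (F : Functor C D) : Prop :=
  forall a b (f f' : Hom C a b), Fmor F f = Fmor F f' -> f = f'.

Definition well_order {T : Type} (R : T -> T -> Prop) : Prop :=
  (forall x, R x x) /\
  (forall x y, R x y -> R y x -> x = y) /\
  (forall x y z, R x y -> R y z -> R x z) /\
  (forall x y, R x y \/ R y x) /\
  (forall P : T -> Prop, (exists x, P x) ->
     exists m, P m /\ forall y, P y -> R m y).

Definition strict {T : Type} (R : T -> T -> Prop) (x y : T) : Prop :=
  R x y /\ x <> y.

Definition admissible_order (C : Category) (c : Ob C)
    (ord : forall c' : Ob C, Hom C c c' -> Hom C c c' -> Prop) : Prop :=
  (forall c', well_order (ord c')) /\
  (forall c' c'' (f f' : Hom C c c') (g : Hom C c' c''),
      strict (ord c') f f' -> strict (ord c'') (comp g f) (comp g f')).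

Definition G1 (C : Category) : Prop :=
  forall c : Ob C, exists ord, admissible_order C c ord.


(* Pull the admissible orders of [D] back along [G]: faithfulness makes each
   [Fmor G] injective on hom-sets, injective maps reflect well-orders, and
   functoriality turns postcomposition in [C] into postcomposition in [D]. *)

Definition rel_preimage {T U : Type} (h : T -> U) (R : U -> U -> Prop) (x y : T) : Prop :=
  R (h x) (h y).

Section InjectivePreimage.

Variables (T U : Type) (h : T -> U) (R : U -> U -> Prop).
Hypothesis h_inj : forall x y, h x = h y -> x = y.

Lemma well_order_preimage : well_order R -> well_order (rel_preimage h R).
Proof.
  intros [Rrefl [Rantisym [Rtrans [Rtotal Rleast]]]]; unfold rel_preimage.
  split; [|split; [|split; [|split]]].
  - intros x; apply Rrefl.
  - intros x y Rxy Ryx; apply h_inj, Rantisym; assumption.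
  - intros x y z Rxy Ryz; eapply Rtrans; eassumption.
  - intros x y; apply Rtotal.
  - intros P [x Px].
    destruct (Rleast (fun u => exists t, P t /\ h t = u)) as [m [[t [Pt <-]] least_m]].
    { exists (h x), x; split; [exact Px | reflexivity]. }
    exists t; split; [exact Pt|].
    intros y Py; apply least_m; exists y; split; [exact Py | reflexivity].
Qed.

Lemma strict_preimage x y : strict (rel_preimage h R) x y <-> strict R (h x) (h y).
Proof.
  unfold strict, rel_preimage; split; intros [Rxy neq]; split; try exact Rxy.
  - intros E; apply neq, h_inj, E.
  - intros ->; apply neq; reflexivity.
Qed.

End InjectivePreimage.

Arguments strict_preimage {T U h R} h_inj x y.

Definition pullback_order {C D : Category} (G : Functor C D) (c : Ob C)
    (ord : forall d : Ob D, Hom D (Fob G c) d -> Hom D (Fob G c) d -> Prop)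
    (c' : Ob C) : Hom C c c' -> Hom C c c' -> Prop :=
  rel_preimage (Fmor G) (ord (Fob G c')).

Lemma admissible_order_pullback (C D : Category) (G : Functor C D) (c : Ob C) ord :
  faithful G -> admissible_order D (Fob G c) ord ->
  admissible_order C c (pullback_order G c ord).
Proof.
  intros G_faithful [ord_wo ord_mono]; unfold pullback_order; split.
  - intros c'; apply well_order_preimage; [apply G_faithful | apply ord_wo].
  - intros c' c'' f f' g lt_ff'.
    apply (strict_preimage (G_faithful _ _)).
    rewrite !F_comp; apply ord_mono.
    exact (proj1 (strict_preimage (G_faithful _ _) f f') lt_ff').
Qed.

Theorem lemma1p16 (C D : Category) (G : Functor C D) :
  G1 D -> faithful G -> G1 C.
Proof.
  intros D_G1 G_faithful c.
  destruct (D_G1 (Fob G c)) as [ord ord_adm].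
  exists (pullback_order G c ord).
  apply admissible_order_pullback; assumption.
Qed.
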